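(* Let $\mathcal{S}_n\subseteq\mathcal{T}$ have $n$ elements, with empirical loss $L_n$, and let $\mathbf{w}_n^*$ be the minimizer of $R_n(\mathbf{w})=L_n(\mathbf{w})+\frac{cV_n}{2}\|\mathbf{w}\|^2$. Let $\mathbf{w}^*$ be a minimizer of the expected loss $L$. Then $$\mathbb{E}\left[\|\mathbf{w}_n^*\|^2\right]\le\frac4c+\|\mathbf{w}^*\|^2 .$$
   Context: Let $Z$ be a random variable with distribution $P$ on a space $\mathcal{Z}$ and $f:\mathbb{R}^p\times\mathcal{Z}\to\mathbb{R}$ a loss function; $L(\mathbf{w})=\mathbb{E}_Z[f(\mathbf{w},Z)]$. The training set $\mathcal{T}=\{z_1,\dots,z_N\}$ consists of $N$ independent samples from $P$; for a (fixed, data-independent) subset $\mathcal{S}_n$ with $n$ elements, $L_n(\mathbf{w})=\frac1n\sum_{z\in\mathcal{S}_n}f(\mathbf{w},z)$. Standing assumption: there are positive constants $V_k$ such that for every $k$ and every set $\mathcal{S}$ of $k$ independent samples from $P$, $\mathbb{E}[\sup_{\mathbf{w}}|L(\mathbf{w})-L_{\mathcal{S}}(\mathbf{w})|]\le V_k$ (expectation over the samples). $c>0$ is a constant. Assumption: for every $z$, $f(\cdot,z)$ is convex with $M$-Lipschitz continuous gradient. *)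

From HB Require Import structures.
From mathcomp Require Import all_boot all_order all_algebra.
From mathcomp Require Import all_classical all_reals all_analysis.
From mathcomp Require Import measurable_realfun.
Set Implicit Arguments. Unset Strict Implicit. Unset Printing Implicit Defensive.
Import Order.TTheory GRing.Theory Num.Theory.
Import numFieldNormedType.Exports.
Local Open Scope classical_set_scope.
Local Open Scope ring_scope.

Definition sqnorm (R : realType) (p : nat) (w : 'rV[R]_p) : R :=
  \sum_(i < p) (w ord0 i) ^+ 2.

Definition enorm (R : realType) (p : nat) (w : 'rV[R]_p) : R :=
  Num.sqrt (sqnorm w).

Definition convex_fun (R : realType) (p : nat) (g : 'rV[R]_p -> R) : Prop :=
  forall (a b : 'rV[R]_p) (t : R), 0 <= t <= 1 ->
    g (t *: a + (1 - t) *: b) <= t * g a + (1 - t) * g b.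

(* g is differentiable with M-Lipschitz gradient (Euclidean norm): the
   differential 'd g w (i.e. v |-> <grad g w, v>) is M-Lipschitz in w for the
   operator norm dual to the Euclidean norm, which is again Euclidean. *)
Definition lipschitz_gradient (R : realType) (p : nat) (M : R)
  (g : 'rV[R]_p -> R) : Prop :=
  (forall w, differentiable g w) /\
  forall (w1 w2 v : 'rV[R]_p),
    `|'d g w1 v - 'd g w2 v| <= M * enorm (w1 - w2) * enorm v.

Definition Lexp (R : realType) (dZ : measure_display) (Z : measurableType dZ)
  (P : probability Z R) (p : nat) (f : 'rV[R]_p -> Z -> R) (w : 'rV[R]_p) : R :=
  fine (\int[P]_x (f w x)%:E).

Definition Lemp (R : realType) (Omega Z : Type) (N p : nat)
  (f : 'rV[R]_p -> Z -> R) (z : 'I_N -> Omega -> Z) (S : {set 'I_N})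
  (omega : Omega) (w : 'rV[R]_p) : R :=
  (#|S|%:R)^-1 * \sum_(i in S) f w (z i omega).

Definition sup_dev (R : realType) (dZ : measure_display) (Z : measurableType dZ)
  (P : probability Z R) (Omega : Type) (N p : nat)
  (f : 'rV[R]_p -> Z -> R) (z : 'I_N -> Omega -> Z) (S : {set 'I_N})
  (omega : Omega) : \bar R :=
  ereal_sup [set (`|Lexp P f w - Lemp f z S omega w|)%:E | w in [set: 'rV[R]_p]].

Definition mutually_independent (R : realType) (d : measure_display)
  (Omega : measurableType d) (mu : probability Omega R)
  (dZ : measure_display) (Z : measurableType dZ) (N : nat)
  (z : 'I_N -> Omega -> Z) : Prop :=
  forall (J : {set 'I_N}) (A : 'I_N -> set Z),
    (forall i, measurable (A i)) ->
    mu (\bigcap_(i in [set i | i \in J]) (z i @^-1` A i)) =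
    (\prod_(i in J) mu (z i @^-1` A i))%E.

Definition distributed_as (R : realType) (d : measure_display)
  (Omega : measurableType d) (mu : probability Omega R)
  (dZ : measure_display) (Z : measurableType dZ) (P : probability Z R)
  (X : Omega -> Z) : Prop :=
  forall A : set Z, measurable A -> mu (X @^-1` A) = P A.

From HB Require Import structures.
From mathcomp Require Import all_boot all_order all_algebra.
From mathcomp Require Import all_classical all_reals all_analysis.
From mathcomp Require Import measurable_realfun.
From mathcomp Require Import lra.
Import Order.TTheory GRing.Theory Num.Theory.
Import numFieldNormedType.Exports.
Local Open Scope classical_set_scope.
Local Open Scope ring_scope.

(* Comparing the regularized objective at [w_n^*] and at [w^*], and swapping
   [L_n] for [L] at the cost of the uniform deviation [s], gives pointwise
   [(c V_n / 2) |w_n^*|^2 <= (c V_n / 2) |w^*|^2 + 2 s].  Taking expectations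
   and using [E s <= V_n], the factor [V_n] cancels and leaves [4 / c]. *)

Lemma sqnorm_ge0 (R : realType) (p : nat) (w : 'rV[R]_p) : 0 <= sqnorm w.
Proof. by apply: sumr_ge0 => i _; exact: sqr_ge0. Qed.

Lemma regularized_minimizer_le (R : realFieldType) (T : Type)
    (L Ln q : T -> R) (lam s : R) (a b : T) :
  0 < lam ->
  `|L a - Ln a| <= s -> `|L b - Ln b| <= s ->
  Ln a + lam / 2 * q a <= Ln b + lam / 2 * q b ->
  L b <= L a ->
  q a <= q b + 4 / lam * s.
Proof.
move=> lam0 /ler_normlP[dev_a dev_a'] /ler_normlP[dev_b dev_b'] min_a min_b.
rewrite -(ler_pM2l lam0) mulrDr mulrA mulrCA divff ?gt_eqF // mulr1.
rewrite !(mulrAC lam 2^-1) in min_a.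
set X := lam * q a in min_a *; set Y := lam * q b in min_a *.
lra.
Qed.

Lemma ereal_sup_norm_ge0 (R : realType) (T : Type) (g : T -> R) (t : T) :
  (0 <= ereal_sup [set `|g w|%:E | w in [set: T]])%E.
Proof.
apply: (@le_trans _ _ `|g t|%:E); first by rewrite lee_fin.
by apply: ereal_sup_ubound; exists t.
Qed.

Lemma regularized_minimizer_le_sup (R : realType) (T : Type)
    (L Ln q : T -> R) (lam : R) (a b : T) :
  0 < lam ->
  Ln a + lam / 2 * q a <= Ln b + lam / 2 * q b ->
  L b <= L a ->
  ((q a)%:E <= (q b)%:E +
     (4 / lam)%:E * ereal_sup [set `|L w - Ln w|%:E | w in [set: T]])%E.
Proof.
move=> lam0 min_a min_b.
have := @ereal_sup_norm_ge0 _ _ (fun w => L w - Ln w) a.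
set s := ereal_sup _.
have dev_le w : (`|L w - Ln w|%:E <= s)%E by apply: ereal_sup_ubound; exists w.
case: s dev_le => [r | | //] dev_le _.
- rewrite -EFinM -EFinD lee_fin.
  by apply: regularized_minimizer_le min_a min_b => //; rewrite -lee_fin.
- by rewrite gt0_muley ?lte_fin ?divr_gt0 // addey // leey.
Qed.

Lemma integral_le_affine_bound (R : realType) (d : measure_display)
    (T : measurableType d) (mu : probability T R)
    (X : T -> R) (Y : T -> \bar R) (a k v : R) :
  0 <= a -> 0 <= k ->
  measurable_fun [set: T] X -> measurable_fun [set: T] Y ->
  (forall x, 0 <= X x) -> (forall x, (0 <= Y x)%E) ->
  (forall x, ((X x)%:E <= a%:E + k%:E * Y x)%E) ->
  (\int[mu]_x Y x <= v%:E)%E ->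
  (\int[mu]_x (X x)%:E <= (a + k * v)%:E)%E.
Proof.
move=> a0 k0 mX mY X0 Y0 X_le EY_le.
have kY0 x : (0 <= k%:E * Y x)%E by rewrite mule_ge0.
apply: (@le_trans _ _ (\int[mu]_x (a%:E + k%:E * Y x))%E).
  apply: ge0_le_integral => //.
  - by move=> x _; rewrite lee_fin.
  - exact/measurable_EFinP.
  - by apply: emeasurable_funD => //; exact: measurable_funeM.
rewrite ge0_integralD //; last exact: measurable_funeM.
have -> : (\int[mu]_x a%:E = a%:E)%E.
  rewrite (integral_cst mu measurableT) -[RHS]mule1; congr (_ * _)%E.
  exact: probability_setT.
rewrite ge0_integralZl ?lee_fin //.
by rewrite EFinD EFinM leeD2l // lee_wpmul2l ?lee_fin.
Qed.

Theorem lemma6 (R : realType)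
  (d : measure_display) (Omega : measurableType d) (mu : probability Omega R)
  (dZ : measure_display) (Z : measurableType dZ) (P : probability Z R)
  (p N : nat) (f : 'rV[R]_p -> Z -> R) (M c : R) (V : nat -> R)
  (z : 'I_N -> Omega -> Z) (Sn : {set 'I_N})
  (wn : Omega -> 'rV[R]_p) (wstar : 'rV[R]_p) :
  (* loss: measurable and integrable in z; convex, M-smooth in w *)
  (forall w, measurable_fun [set: Z] (f w)) ->
  (forall w, P.-integrable [set: Z] (fun x => (f w x)%:E)) ->
  (forall x, convex_fun (fun w => f w x)) ->
  (forall x, lipschitz_gradient M (fun w => f w x)) ->
  0 < c ->
  (forall k, 0 < V k) ->
  (* training set: N independent samples with distribution P *)
  (forall i, measurable_fun [set: Omega] (z i)) ->
  (forall i, distributed_as mu P (z i)) ->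
  mutually_independent mu z ->
  (* standing assumption on every nonempty set S of k samples *)
  (forall S : {set 'I_N}, (0 < #|S|)%N ->
     (\int[mu]_om sup_dev P f z S om <= (V #|S|)%:E)%E) ->
  (* the random variables whose expectations are taken are measurable *)
  measurable_fun [set: Omega] (fun om => sup_dev P f z Sn om : \bar R) ->
  measurable_fun [set: Omega] (fun om => sqnorm (wn om)) ->
  (* S_n : a fixed nonempty subset with n = #|S_n| elements *)
  (0 < #|Sn|)%N ->
  (* w_n^* minimizes R_n = L_n + c V_n / 2 ||w||^2 *)
  (forall om w,
     Lemp f z Sn om (wn om) + c * V #|Sn| / 2 * sqnorm (wn om)
     <= Lemp f z Sn om w + c * V #|Sn| / 2 * sqnorm w) ->
  (* w^* minimizes L *)
  (forall w, Lexp P f wstar <= Lexp P f w) ->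
  (\int[mu]_om (sqnorm (wn om))%:E <= (4 / c + sqnorm wstar)%:E)%E.
Proof.
move=> _ _ _ _ c0 V0 _ _ _ E_sup_dev m_sup_dev m_wn Sn0 min_wn min_wstar.
have cV0 : 0 < c * V #|Sn| by rewrite mulr_gt0.
have -> : 4 / c = 4 / (c * V #|Sn|) * V #|Sn|.
  by rewrite invfM mulrA mulfVK ?gt_eqF.
rewrite addrC; apply: (@integral_le_affine_bound _ _ _ _ _ (sup_dev P f z Sn)).
- exact: sqnorm_ge0.
- by rewrite ltW ?divr_gt0.
- exact: m_wn.
- exact: m_sup_dev.
- by move=> om; exact: sqnorm_ge0.
- by move=> om; exact: (@ereal_sup_norm_ge0 _ _
    (fun w => Lexp P f w - Lemp f z Sn om w) 0).
- move=> om.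
  exact: regularized_minimizer_le_sup cV0 (min_wn om wstar) (min_wstar (wn om)).
- exact: E_sup_dev Sn0.
Qed.
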